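(* Let $G=(V,E)$ be an atomic bispanning graph and $v\in V$ a vertex of degree $3$ with adjacent vertices $x,y,z$, joined to $v$ by the edges $e_x,e_y,e_z$ respectively. For each $(a,b)\in\{(x,y),(x,z),(y,z)\}$, the graph $G_{a,b}$ with vertex set $V-v$ and edge set $E-e_x-e_y-e_z+e_{a,b}$, where $e_{a,b}$ is a new edge with ends $a$ and $b$, is bispanning.
   Context: Graphs are finite, undirected, may have parallel edges, no loops; $X\pm a$ denotes adding/removing a single element. A spanning tree of $G$ is $T\subseteq E$ with $(V,T)$ connected and acyclic; $G$ is bispanning if $E$ is the union of two disjoint spanning trees. A bispanning graph is atomic if its only bispanning subgraphs are itself and single vertices. Equivalently $G_{a,b}$ is obtained from $G$ by contracting $e_a$ (merging $v$ into $a$) and deleting the former edge $e_c$, $c$ being the third neighbour; the paper calls $G_{x,y},G_{x,z},G_{y,z}$ the reduction graphs of $G$ at $v$. *)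

(* Finite loopless multigraphs: vertices a finType V,
   edges a finType E, each edge e has ends src e and dst e (undirected). *)
From mathcomp Require Import all_boot.
Set Implicit Arguments. Unset Strict Implicit. Unset Printing Implicit Defensive.

Section Graphs.
Variables (V E : finType) (src dst : E -> V).

Definition joins (e : E) (a b : V) : bool :=
  ((src e == a) && (dst e == b)) || ((src e == b) && (dst e == a)).

Definition adj (F : {set E}) : rel V :=
  fun u w => [exists e in F, joins e u w].

Definition gconnected (W : {set V}) (F : {set E}) : Prop :=
  forall x y, x \in W -> y \in W -> connect (adj F) x y.

(* F contains a cycle: distinct vertices v_0..v_{k-1}, distinct edges
   e_1..e_k (k >= 1) with e_i joining v_{i-1} and v_i (indices mod k) *)
Definition has_cycle (F : {set E}) : Prop :=
  exists (vs : seq V) (es : seq E),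
    [/\ 0 < size es, uniq vs, uniq es, {subset es <= F} &
        all2 (fun e (p : V * V) => joins e p.1 p.2) es (zip vs (rot 1 vs))].

Definition spanning_tree (W : {set V}) (F T : {set E}) : Prop :=
  [/\ T \subset F, gconnected W T & ~ has_cycle T].

Definition bispanning (W : {set V}) (F : {set E}) : Prop :=
  exists T1 T2 : {set E},
    [/\ spanning_tree W F T1, spanning_tree W F T2,
        [disjoint T1 & T2] & T1 :|: T2 = F].

Definition is_subgraph (W : {set V}) (F : {set E}) (W' : {set V}) (F' : {set E}) : Prop :=
  [/\ W' != set0, W' \subset W, F' \subset F &
      forall e, e \in F' -> (src e \in W') && (dst e \in W')].

Definition atomic : Prop :=
  bispanning [set: V] [set: E] /\
  forall W' F', is_subgraph [set: V] [set: E] W' F' -> bispanning W' F' ->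
    (W' = [set: V] /\ F' = [set: E]) \/ (exists u, W' = [set u]).

End Graphs.

(* reduction graph G_{a,b}: edge type option E, None is the new edge e_{a,b} *)
Definition red_ends (V E : finType) (ends : E -> V) (c : V) : option E -> V :=
  fun o => if o is Some e then ends e else c.

Definition red_edges (E : finType) (ex ey ez : E) : {set option E} :=
  [set o | if o is Some e then e \notin [set ex; ey; ez] else true].

Definition red_vertices (V : finType) (v : V) : {set V} := [set: V] :\ v.

(* Take complementary spanning trees T1, T2. As v has degree 3 and both trees reach v, one
   tree contains exactly one of the edges at v, say ec in T1 and ea, eb in T2. Then
   T1 - ec and T2 - ea - eb + e_{a,b} are complementary spanning trees of G_{a,b}: deleting
   the pendant edge ec keeps T1 connected on V - v, and replacing the path a v b of T2 by
   e_{a,b} preserves both connectivity and acyclicity.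
   It remains to move the lonely edge to each of the three positions. Suppose ez is in T1
   and ex, ey are in T2, and let X be the component of x in T2 - ex - ey. If z is not in X,
   swapping ez and ey between the trees works. Otherwise, by atomicity, T1 cannot span
   S = X + v within G[S], since T2 does and G[S] would then be a proper bispanning subgraph.
   So the T1-path from some vertex of S to x leaves S through an edge f, and some edge g of
   T2 - ex - ey on the path from the inner end of f to x can be exchanged with f; this
   strictly shrinks X, so the process terminates. *)

From mathcomp Require Import all_boot.
Set Implicit Arguments. Unset Strict Implicit. Unset Printing Implicit Defensive.

Lemma connect_ind (T : finType) (r : rel T) (R : T -> T -> Prop) :
  (forall u, R u u) -> (forall u w t, r u w -> R w t -> R u t) ->
  forall u w, connect r u w -> R u w.
Proof.
move=> Rrefl Rstep u w /connectP [p pth ->] {w}.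
elim: p u pth => [|c p IH] u /= => [_|/andP[ruc pc]]; first exact: Rrefl.
exact: Rstep ruc (IH _ pc).
Qed.

Lemma connect_map (T T' : finType) (r : rel T) (r' : rel T') (phi : T -> T') :
  (forall u w, r u w -> connect r' (phi u) (phi w)) ->
  forall u w, connect r u w -> connect r' (phi u) (phi w).
Proof.
move=> rr'; apply: connect_ind => [u|u w t ruw IH]; first exact: connect0.
exact: connect_trans (rr' _ _ ruw) IH.
Qed.

Lemma all2_mem (A B : eqType) (r : A -> B -> bool) s t a :
  all2 r s t -> a \in s -> exists2 b, b \in t & r a b.
Proof.
elim: s t => [|a0 s IH] [|b t] //= /andP [r0 rs].
rewrite inE => /orP [/eqP ->|ain]; first by exists b; rewrite ?inE ?eqxx.
by have [b' b'in rb'] := IH _ rs ain; exists b'; rewrite // inE b'in orbT.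
Qed.

Lemma mem_zip (A B : eqType) (s : seq A) (t : seq B) p :
  p \in zip s t -> (p.1 \in s) && (p.2 \in t).
Proof.
elim: s t => [|a s IH] [|b t] //=; rewrite inE => /orP [/eqP -> /=|pin].
  by rewrite !inE !eqxx.
by have /andP [h1 h2] := IH _ pin; rewrite !inE h1 h2 !orbT.
Qed.

Lemma all2_rcons (A B : Type) (r : A -> B -> bool) s t a b :
  size s = size t -> all2 r (rcons s a) (rcons t b) = all2 r s t && r a b.
Proof.
elim: s t => [|a0 s IH] [|b0 t] //=; first by rewrite andbT.
by move=> [sz]; rewrite IH // andbA.
Qed.

Lemma setD1C (T : finType) (A : {set T}) a b : A :\ a :\ b = A :\ b :\ a.
Proof. by rewrite !setDDl setUC. Qed.

Section Connectivity.
Variables (V E : finType) (src dst : E -> V).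
Implicit Types (F T : {set E}) (e f g : E) (a b u w : V).
Local Notation joins := (joins src dst).
Local Notation con F := (connect (adj src dst F)).

Lemma joinsC e a b : joins e a b = joins e b a.
Proof. by rewrite /joins orbC. Qed.

Lemma joins_ends e : joins e (src e) (dst e).
Proof. by rewrite /joins !eqxx. Qed.

Lemma joinsP e a b : joins e a b ->
  (src e = a /\ dst e = b) \/ (src e = b /\ dst e = a).
Proof. by case/orP => /andP [/eqP -> /eqP ->]; [left|right]. Qed.

Lemma joins_end e a b a' b' : joins e a b -> joins e a' b' -> (a == a') || (a == b').
Proof.
by case/joinsP => -[? ?] /joinsP [] [? ?]; subst; rewrite eqxx ?orbT.
Qed.

Lemma adjC F : symmetric (adj src dst F).
Proof.
by move=> a b; apply/existsP/existsP => -[e /andP [eF J]]; exists e; rewrite eF joinsC.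
Qed.

Lemma connectC F a b : con F a b = con F b a.
Proof. exact: (sym_connect_sym (adjC F)). Qed.

Lemma connect_edge F e a b : e \in F -> joins e a b -> con F a b.
Proof. by move=> eF J; apply/connect1/existsP; exists e; rewrite eF. Qed.

Lemma connect_subset F F' a b : F \subset F' -> con F a b -> con F' a b.
Proof.
move=> sFF'; apply: connect_sub => u w /existsP [e /andP [eF J]].
exact: connect_edge (subsetP sFF' _ eF) J.
Qed.

Lemma connect_ends F e a b : joins e a b -> con F (src e) (dst e) = con F a b.
Proof. by case/joinsP => -[-> ->]; rewrite // connectC. Qed.

Lemma connect_invariant F (P : pred V) :
  (forall e, e \in F -> P (src e) = P (dst e)) -> forall u w, con F u w -> P u = P w.
Proof.
move=> inv; apply: connect_ind => // a c b /existsP [e /andP [eF J]] <-.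
by case/joinsP: J => -[<- <-]; rewrite inv.
Qed.

Lemma connect_isolated F a u :
  (forall e, e \in F -> (src e != a) && (dst e != a)) -> con F a u -> u = a.
Proof.
move=> iso C; apply/eqP; have /= <- // := connect_invariant (P := pred1 a) _ C.
by move=> e /iso /andP [/negbTE -> /negbTE ->].
Qed.

Lemma connect_closed F (S : {set V}) u w :
  (forall e, e \in F -> (src e \in S) && (dst e \in S)) -> con F u w -> u \in S -> w \in S.
Proof.
move=> ins C; have /= <- // := connect_invariant (P := mem S) _ C.
by move=> e /ins /andP [-> ->].
Qed.

Lemma connect_setD1 F f u w : con F u w ->
  [\/ con (F :\ f) u w,
      con (F :\ f) u (src f) /\ con (F :\ f) (dst f) w |
      con (F :\ f) u (dst f) /\ con (F :\ f) (src f) w].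
Proof.
pose G := F :\ f.
apply: (connect_ind (R := fun u w => [\/ con G u w,
      con G u (src f) /\ con G (dst f) w | con G u (dst f) /\ con G (src f) w])).
  by move=> a; constructor 1.
move=> a c b /existsP [e /andP [eF J]] IH.
have [ef|nef] := eqVneq e f.
  subst e; case/joinsP: J IH => -[<- <-] [|[]|[]] *;
    by [constructor 1 | constructor 2 | constructor 3].
have ac : con G a c by apply: connect_edge J; rewrite !inE nef.
case: IH => [h|[h1 h2]|[h1 h2]].
- by constructor 1; apply: connect_trans ac h.
- by constructor 2; split => //; apply: connect_trans ac h1.
- by constructor 3; split => //; apply: connect_trans ac h1.
Qed.

Lemma connect_restrict F a u : con F a u ->
  con (F :&: [set e | con F a (src e) && con F a (dst e)]) a u.
Proof.
set F' := F :&: _.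
suff H u' w : con F u' w -> con F a u' -> con F' u' w by move/H; apply.
move: u' w; apply: connect_ind => [u0 _|u0 c w /existsP [e /andP [eF J]] IH au].
  exact: connect0.
have ac : con F a c by apply: connect_trans au (connect_edge eF J).
have eF' : e \in F' by rewrite !inE eF; case/joinsP: (J) => -[-> ->]; rewrite au ac.
exact: connect_trans (connect_edge eF' J) (IH ac).
Qed.

Definition forest T := forall e, e \in T -> ~~ con (T :\ e) (src e) (dst e).

Lemma connect_chain F a s b es : {subset es <= F} ->
  all2 (fun e (p : V * V) => joins e p.1 p.2) es (zip (a :: s) (rcons s b)) ->
  con F a b.
Proof.
elim: s a es => [|c s IH] a [|e es] //= sub /andP [J rest].
  by apply: connect_edge J; apply: sub; rewrite inE eqxx.
apply: connect_trans (IH c es _ rest); first by apply: connect_edge J; apply: sub; rewrite inE eqxx.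
by move=> e' e'in; apply: sub; rewrite inE e'in orbT.
Qed.

Lemma forest_acyclic T : forest T -> ~ has_cycle src dst T.
Proof.
move=> fT [vs [[|e es] [//= _ uvs /andP [enes ues] sub al]]].
have eT : e \in T by apply: sub; rewrite inE eqxx.
have sub' : {subset es <= T :\ e}.
  move=> e' e'in; rewrite !inE sub ?inE ?e'in ?orbT // andbT.
  by apply: contraNneq enes => <-.
case: vs uvs al => [|a [|c s]] _ //; rewrite rot1_cons /= => /andP [J rest].
  by have := fT e eT; case/joinsP: J => -[-> ->]; rewrite connect0.
have C := connect_chain sub' rest.
by have := fT e eT; case/joinsP: J => -[-> ->]; rewrite ?C // connectC C.
Qed.

Lemma path_edges F u p : path (adj src dst F) u p -> uniq (u :: p) ->
  exists es, [/\ size es = size p, {subset es <= F}, uniq es &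
     all2 (fun e (q : V * V) => joins e q.1 q.2) es (zip (belast u p) p)].
Proof.
elim: p u => [|c p IH] u /=; first by exists [::].
case/andP => /existsP [e /andP [eF J]] pth /andP [unin ucp].
have [es [sz sub ues al]] := IH c pth ucp.
exists (e :: es); split => /=; rewrite ?sz ?J ?al //.
  by move=> e'; rewrite inE => /orP [/eqP -> //| /sub].
rewrite ues andbT; apply/negP => ees.
have [q /mem_zip /andP [/mem_belast q1 q2] Jq] := all2_mem al ees.
have q2' : q.2 \in c :: p by rewrite inE q2 orbT.
by case/orP: (joins_end J Jq) => /eqP equ; move: unin; rewrite equ ?q1 ?q2'.
Qed.

Lemma acyclic_forest T : ~ has_cycle src dst T -> forest T.
Proof.
move=> nc e eT; apply/negP => C; apply: nc.
have [loop|nloop] := eqVneq (src e) (dst e).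
  exists [:: src e], [:: e]; split => //=; first by move=> e'; rewrite inE => /eqP ->.
  by rewrite /joins loop !eqxx.
have [p [pth up lst]] : exists p, [/\ path (adj src dst (T :\ e)) (src e) p,
    uniq (src e :: p) & last (src e) p = dst e].
  case/connectP: C => p0 pth0 ->.
  by case: (shortenP pth0) => p' ? ? _; exists p'.
have [es [sz sub ues al]] := path_edges pth up.
exists (src e :: p), (rcons es e); split => //.
- by rewrite size_rcons.
- by rewrite rcons_uniq ues andbT; apply/negP => /sub; rewrite !inE eqxx.
- by move=> e'; rewrite mem_rcons inE => /orP [/eqP -> //|/sub]; rewrite inE => /andP [].
rewrite rot1_cons lastI zip_rcons ?size_belast // all2_rcons;
  last by rewrite size_zip size_belast sz minnn.
by rewrite al lst joinsC joins_ends.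
Qed.

Lemma forest_subset T T' : T' \subset T -> forest T -> forest T'.
Proof.
move=> sub /forest_acyclic ncT; apply: acyclic_forest => -[vs [es [n0 uvs ues sub' al]]].
by apply: ncT; exists vs, es; split => // e /sub'; apply: (subsetP sub).
Qed.

Lemma connected_setD1 T g u : gconnected src dst [set: V] T ->
  con (T :\ g) u (src g) \/ con (T :\ g) u (dst g).
Proof.
move=> cT; have := cT u (src g) (in_setT _) (in_setT _).
by case/(connect_setD1 g) => [h|[h _]|[h _]]; [left|left|right].
Qed.

Lemma exchange_connected T g f : gconnected src dst [set: V] T ->
  ~~ con (T :\ g) (src f) (dst f) -> gconnected src dst [set: V] (T :\ g :|: [set f]).
Proof.
move=> cT nc; set T' := T :\ g :|: [set f].
have sub : T :\ g \subset T' by apply: subsetUl.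
have via a b : con (T :\ g) a (src f) -> con (T :\ g) (dst f) b -> con T' a b.
  move=> af fb; apply: connect_trans (connect_subset sub af) _.
  apply: connect_trans _ (connect_subset sub fb).
  by apply: connect_edge (joins_ends f); rewrite !inE eqxx orbT.
have gg : con T' (src g) (dst g).
  have [sf|sf] := connected_setD1 g (src f) cT; have [df|df] := connected_setD1 g (dst f) cT.
  - by rewrite (connect_trans sf) // connectC in nc.
  - by apply: via; rewrite // connectC.
  - by rewrite connectC; apply: via; rewrite // connectC.
  - by rewrite (connect_trans sf) // connectC in nc.
have toS u : con T' u (src g).
  have [h|h] := connected_setD1 g u cT; first exact: connect_subset sub h.
  by apply: connect_trans (connect_subset sub h) _; rewrite connectC.
by move=> a b _ _; apply: connect_trans (toS a) _; rewrite connectC.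
Qed.

Lemma exchange_forest T g f : forest T -> ~~ con (T :\ g) (src f) (dst f) ->
  forest (T :\ g :|: [set f]).
Proof.
move=> fT nc; set T' := T :\ g :|: [set f].
have fTg : f \notin T :\ g by apply: contra nc => fTg; apply: connect_edge fTg (joins_ends f).
move=> h hT'; have [->|nhf] := eqVneq h f.
  by rewrite /T' setUC setU1K.
have hTg : h \in T :\ g by move: hT'; rewrite !inE (negbTE nhf) orbF.
have hT : h \in T by move: hTg; rewrite !inE => /andP [].
have sub2 : T' :\ h :\ f \subset T :\ g.
  by apply/subsetP => e; rewrite !inE => /andP [/negbTE -> /andP [_]]; rewrite orbF.
have sub1 : T' :\ h :\ f \subset T :\ h.
  apply/subsetP => e eT'; have := subsetP sub2 e eT'; move: eT'.
  by rewrite !inE => /andP [_ /andP [-> _]] /andP [_ ->].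
have hh : con (T :\ g) (src h) (dst h) by apply: connect_edge hTg (joins_ends h).
apply/negP => /(connect_setD1 f) [k|[k1 k2]|[k1 k2]].
- by move: (fT h hT); rewrite (connect_subset sub1 k).
- move: nc; rewrite connectC in k1.
  by rewrite (connect_trans (connect_subset sub2 k1)) // (connect_trans hh) //;
     rewrite connectC; apply: connect_subset sub2 k2.
- move: nc; rewrite connectC in hh.
  by rewrite (connect_trans (connect_subset sub2 k2)) // (connect_trans hh) //;
     apply: connect_subset sub2 k1.
Qed.

Lemma minimal_connecting_subset F a b : con F a b ->
  exists2 F' : {set E}, F' \subset F &
    con F' a b /\ forall g, g \in F' -> ~~ con (F' :\ g) a b.
Proof.
elim: {F}_.+1 {-2}F (ltnSn #|F|) => // n IH F Fn C.
have [crit|] := boolP [forall (g | g \in F), ~~ con (F :\ g) a b].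
  by exists F => //; split => // g gF; move/forall_inP: crit; apply.
case/forall_inPn => g gF; rewrite negbK => Cg.
have Fg : #|F :\ g| < n by move: Fn; rewrite (cardsD1 g F) gF.
have [F' sub crit] := IH _ Fg Cg.
by exists F' => //; apply: subset_trans sub (subsetDl _ _).
Qed.

Lemma forest_path_cut F a b (P : pred V) : forest F -> con F a b -> P a -> ~~ P b ->
  exists2 g, g \in F & (P (src g) != P (dst g)) && ~~ con (F :\ g) a b.
Proof.
move=> fF C Pa Pb; have [F' sub [C' crit]] := minimal_connecting_subset C.
have [g gF' cut] : exists2 g, g \in F' & P (src g) != P (dst g).
  apply/exists_inP; apply: contraT => /exists_inPn same.
  suff : P a = P b by rewrite Pa (negbTE Pb).
  by apply: connect_invariant C' => e /same; rewrite negbK => /eqP.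
have gF : g \in F by apply: (subsetP sub).
exists g; rewrite // cut /=; apply/negP => Cg.
have sub' : F' :\ g \subset F :\ g by apply: setSD.
have := fF g gF; case: (connect_setD1 g C') => [k|[k1 k2]|[k1 k2]].
- by move: (crit g gF'); rewrite k.
- rewrite connectC in k1.
  by rewrite (connect_trans (connect_subset sub' k1) (connect_trans Cg _)) //
    connectC (connect_subset sub' k2).
- rewrite connectC in Cg.
  by rewrite (connect_trans (connect_subset sub' k2) (connect_trans Cg _)) //
    (connect_subset sub' k1).
Qed.

Lemma joins_neq e a b : src e != dst e -> joins e a b -> a != b.
Proof. by move=> nloop /joinsP [] [<- <-]; rewrite // eq_sym. Qed.

Lemma joins_off e a b c : joins e a b -> (src e != c) && (dst e != c) -> a != c.
Proof. by case/joinsP => -[? ?]; subst => /andP []. Qed.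

Lemma edge_across e (P : pred V) : P (src e) != P (dst e) ->
  exists a b, [/\ joins e a b, P a & ~~ P b].
Proof.
case Ps: (P (src e)); case Pd: (P (dst e)) => // _.
  by exists (src e), (dst e); rewrite Ps Pd joins_ends.
by exists (dst e), (src e); rewrite Ps Pd joinsC joins_ends.
Qed.

Lemma forest_path_cross F T a b : forest F -> con F a b -> ~~ con T a b ->
  exists2 g, g \in F & ~~ con T (src g) (dst g) && ~~ con (F :\ g) a b.
Proof.
move=> fF C nC; have [g gF /andP [cut nCg]] := forest_path_cut fF C (connect0 _ a) nC.
exists g; rewrite // nCg andbT; apply: contra cut => Cg.
by apply/eqP; apply/idP/idP => h; apply: connect_trans h _; rewrite // connectC.
Qed.

Definition incident v := [set e | (src e == v) || (dst e == v)].

Lemma connected_incident T v x : gconnected src dst [set: V] T -> x != v ->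
  exists2 e, e \in T & e \in incident v.
Proof.
move=> cT xv; apply/exists_inP; apply: contraNT xv => /exists_inPn off.
rewrite -(connect_isolated _ (cT v x (in_setT _) (in_setT _))) // => e /off.
by rewrite inE negb_or.
Qed.

Lemma connected_delete_leaf T e v c p q : gconnected src dst [set: V] T -> joins e v c ->
  (forall e', e' \in T :\ e -> (src e' != v) && (dst e' != v)) ->
  p != v -> q != v -> con (T :\ e) p q.
Proof.
move=> cT J off pv qv.
have nv u : u != v -> ~~ con (T :\ e) u v.
  by move=> uv; rewrite connectC; apply: contra uv => /(connect_isolated off) ->.
case: (connect_setD1 e (cT p q (in_setT _) (in_setT _))) => [//|[pu qu]|[pu qu]];
  case/joinsP: J pu qu => -[-> ->] pu qu;
  by [case/negP: (nv p pv) | case/negP: (nv q qv); rewrite connectC].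
Qed.

Lemma spanning_tree_from (W : {set V}) F T c : forest T ->
  (forall u, u \in W -> con (T :&: F) c u) -> spanning_tree src dst W F (T :&: F).
Proof.
move=> fT hub; split; first exact: subsetIr.
  by move=> a b aW bW; apply: connect_trans (hub b bW); rewrite connectC hub.
by apply/forest_acyclic/(forest_subset _ fT)/subsetIl.
Qed.

Inductive complementary_trees T1 T2 : Prop :=
  ComplementaryTrees of
    gconnected src dst [set: V] T1 & forest T1 &
    gconnected src dst [set: V] T2 & forest T2 &
    [disjoint T1 & T2] & T1 :|: T2 = [set: E].

Lemma complementary_treesC T1 T2 :
  complementary_trees T1 T2 -> complementary_trees T2 T1.
Proof. by case=> *; split; rewrite // 1?disjoint_sym 1?setUC. Qed.

Lemma complementary_trees_disjoint T1 T2 e :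
  complementary_trees T1 T2 -> e \in T1 -> e \notin T2.
Proof. by case=> _ _ _ _ dis _ /(disjointFr dis) ->. Qed.

Lemma complementary_trees_cover T1 T2 e :
  complementary_trees T1 T2 -> e \notin T1 -> e \in T2.
Proof. by case=> _ _ _ _ _ /setP /(_ e); rewrite !inE => /orP [->|]. Qed.

Lemma bispanning_complementary :
  bispanning src dst [set: V] [set: E] -> exists T1 T2, complementary_trees T1 T2.
Proof.
case=> T1 [T2 [[_ c1 nc1] [_ c2 nc2] dis cover]].
by exists T1, T2; split => //; apply: acyclic_forest.
Qed.

Lemma swap_complementary T1 T2 f g : complementary_trees T1 T2 -> f \in T1 -> g \in T2 ->
  ~~ con (T1 :\ f) (src g) (dst g) -> ~~ con (T2 :\ g) (src f) (dst f) ->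
  complementary_trees (T1 :\ f :|: [set g]) (T2 :\ g :|: [set f]).
Proof.
move=> D fT1 gT2 n1 n2; case: (D) => c1 f1 c2 f2 _ _.
have fT2 := complementary_trees_disjoint D fT1.
have gT1 := complementary_trees_disjoint (complementary_treesC D) gT2.
have fg : f != g by apply: contraNneq fT2 => ->.
split; [exact: exchange_connected | exact: exchange_forest |
        exact: exchange_connected | exact: exchange_forest | |].
  rewrite -setI_eq0; apply/eqP/setP => e; rewrite !inE.
  have [->|ef] := eqVneq e f; first by rewrite (negbTE fg).
  have [->|eg] := eqVneq e g; first by rewrite orbT.
  by rewrite !orbF; apply/negP => /andP [/andP [_ /(complementary_trees_disjoint D)/negP]].
apply/setP => e; rewrite !inE.
have [->|ef] := eqVneq e f; first by rewrite !orbT.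
have [->|eg] := eqVneq e g; first by rewrite !orbT.
by rewrite /= !orbF; case: (boolP (e \in T1)) => // /(complementary_trees_cover D).
Qed.

Lemma connect_setD1_away F f b c a t : joins f b c ->
  ~~ con (F :\ f) a b -> ~~ con (F :\ f) a c -> con F a t -> con (F :\ f) a t.
Proof.
case/joinsP => -[<- <-] nb nc /(connect_setD1 f) [//|[ab _]|[ac _]];
  by [rewrite ab in nb | rewrite ac in nc | rewrite ab in nc | rewrite ac in nb].
Qed.

Definition separated ea eb ec := exists T1 T2,
  [/\ complementary_trees T1 T2, ec \in T1, ea \in T2 & eb \in T2].

Lemma separatedC ea eb ec : separated ea eb ec -> separated eb ea ec.
Proof. by case=> T1 [T2 [D ?]]; exists T1, T2; split. Qed.

Section Rotation.
Variables (v x y z : V) (ex ey ez : E).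
Hypotheses (loopless : forall e, src e != dst e) (atomic_G : atomic src dst).
Hypotheses (Hex : joins ex v x) (Hey : joins ey v y) (Hez : joins ez v z).
Hypotheses (incident_v : incident v = [set ex; ey; ez]) (ex_ey : ex != ey).

Let vx : v != x := joins_neq (loopless ex) Hex.
Let vy : v != y := joins_neq (loopless ey) Hey.
Let vz : v != z := joins_neq (loopless ez) Hez.

Lemma edge_off_v F : ex \notin F -> ey \notin F -> ez \notin F ->
  forall e, e \in F -> (src e != v) && (dst e != v).
Proof.
move=> nx ny nz e eF; rewrite -negb_or; apply/negP => ev.
have : e \in incident v by rewrite inE.
by rewrite incident_v !inE -orbA => /or3P [] /eqP ee; rewrite -ee eF in nx ny nz.
Qed.

Definition reach T := #|[set u | con (T :\ ex :\ ey) x u]|.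

Section Step.
Variables T1 T2 : {set E}.
Hypotheses (D : complementary_trees T1 T2) (ezT1 : ez \in T1).
Hypotheses (exT2 : ex \in T2) (eyT2 : ey \in T2).
Local Notation F0 := (T2 :\ ex :\ ey).

Let exT1 : ex \notin T1 := complementary_trees_disjoint (complementary_treesC D) exT2.
Let eyT1 : ey \notin T1 := complementary_trees_disjoint (complementary_treesC D) eyT2.
Let ezT2 : ez \notin T2 := complementary_trees_disjoint D ezT1.

Lemma F0_off_v e : e \in F0 -> (src e != v) && (dst e != v).
Proof. by apply: edge_off_v; rewrite !inE ?eqxx ?(negbTE ezT2) /= ?andbF. Qed.

Lemma T1_off_v e : e \in T1 :\ ez -> (src e != v) && (dst e != v).
Proof. by apply: edge_off_v; rewrite !inE ?eqxx ?(negbTE exT1) ?(negbTE eyT1) /= ?andbF. Qed.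

Lemma F0_disconnects_xy : ~~ con F0 x y.
Proof.
case: D => _ _ _ fT2 _ _; apply: contra (fT2 ey eyT2) => C.
rewrite (connect_ends _ Hey).
apply: connect_trans (connect_edge _ Hex) (connect_subset _ C); first by rewrite !inE ex_ey.
by apply/subsetP => e; rewrite !inE => /and3P [-> _ ->].
Qed.

Lemma rotate_direct : ~~ con F0 x z -> separated ex ez ey.
Proof.
move=> nxz; exists (T1 :\ ez :|: [set ey]), (T2 :\ ey :|: [set ez]).
split; rewrite ?inE ?eqxx ?orbT ?exT2 ?(negbTE ex_ey) //.
apply: swap_complementary => //.
  rewrite (connect_ends _ Hey); apply: contra vy => /(connect_isolated T1_off_v) ->.
  by rewrite eqxx.
have nzv : ~~ con F0 z v.
  by rewrite connectC; apply: contra vz => /(connect_isolated F0_off_v) ->.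
rewrite (connect_ends _ Hez) connectC; apply: contra (nzv) => C.
by rewrite setD1C; apply: connect_setD1_away Hex _ _ C; rewrite -setD1C // connectC.
Qed.

Section Component.
Hypothesis xz : con F0 x z.
Local Notation S := (v |: [set u | con F0 x u]).
Local Notation FS := [set e | (src e \in S) && (dst e \in S)].

Lemma T2_spans_component u : u \in S -> con (T2 :&: FS) x u.
Proof.
rewrite !inE => /orP [/eqP ->|xu].
  rewrite connectC; apply: connect_edge Hex; rewrite !inE exT2 /=.
  by case/joinsP: Hex => -[-> ->]; rewrite eqxx connect0 ?orbT.
apply: connect_subset (connect_restrict xu); apply/subsetP => e; rewrite !inE.
by case/andP => /and3P [_ _ ->] /andP [-> ->]; rewrite !orbT.
Qed.

Lemma T1_does_not_span_component : exists2 w, w \in S & ~~ con (T1 :&: FS) x w.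
Proof.
have [/forall_inP span|/forall_inPn [w wS nw]] :=
  boolP [forall (u | u \in S), con (T1 :&: FS) x u]; last by exists w.
case: D atomic_G => _ f1 _ f2 dis cover [_ /(_ S FS)].
have vS : v \in S by rewrite !inE eqxx.
have xS : x \in S by rewrite !inE connect0 orbT.
case => //.
- split; [by apply/set0Pn; exists v | exact: subsetT | exact: subsetT |].
  by move=> e; rewrite inE.
- exists (T1 :&: FS), (T2 :&: FS); split.
  + exact: spanning_tree_from f1 span.
  + exact: spanning_tree_from f2 T2_spans_component.
  + exact: disjointW (subsetIl _ _) (subsetIl _ _) dis.
  + by rewrite -setIUl cover setTI.
- case=> SV _; have : y \in S by rewrite SV inE.
  by rewrite !inE eq_sym (negbTE vy) (negbTE F0_disconnects_xy).
- case=> u Su; move: vS xS; rewrite Su !inE => /eqP vu /eqP xu.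
  by move: vx; rewrite xu vu eqxx.
Qed.

Lemma leaving_edge : exists f a b,
  [/\ f \in T1 :\ ez, joins f a b, a \in S, b \notin S & ~~ con (T1 :\ f) a x].
Proof.
have [w wS nw] := T1_does_not_span_component.
case: D => c1 f1 _ _ _ _; pose P := con (T1 :&: FS) w.
have nPx : ~~ P x by rewrite /P connectC.
have [f fT1 /andP [cut nwx]] :=
  forest_path_cut f1 (c1 w x (in_setT _) (in_setT _)) (connect0 _ w) nPx.
have [a [b [J Pa Pb]]] := edge_across cut.
have aS : a \in S by apply: connect_closed Pa wS => e; rewrite !inE => /andP [].
have bS : b \notin S.
  apply: contra Pb => bS; apply: connect_trans Pa (connect_edge _ J).
  by rewrite in_setI fT1 inE; case/joinsP: (J) => -[-> ->]; rewrite aS bS.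
exists f, a, b; split => //.
- rewrite !inE fT1 andbT; apply: contraNneq bS => fez; rewrite joinsC fez in J.
  by case/orP: (joins_end J Hez) => /eqP ->; rewrite !inE ?eqxx ?xz ?orbT.
apply: contra nwx => ax; apply: connect_trans (connect_subset _ Pa) ax.
apply/subsetP => e; rewrite in_setI !in_setD1 => /andP [eT1 eFS]; rewrite eT1 andbT.
apply: contraTneq eFS => ->; rewrite inE.
by case/joinsP: J => -[-> ->]; rewrite (negbTE bS) ?andbF.
Qed.

Section Exchange.
Variables (f g : E) (a b : V).
Hypotheses (fT1 : f \in T1 :\ ez) (Jf : joins f a b) (aS : a \in S) (bS : b \notin S).

Lemma component_contains_tail : con F0 x a.
Proof.
by move: aS; rewrite !inE (negbTE (joins_off Jf (T1_off_v fT1))).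
Qed.

Hypotheses (gF0 : g \in F0) (ng : ~~ con (F0 :\ g) a x).

Lemma exchange_disconnects : ~~ con (T2 :\ g) a b.
Proof.
have HF0 : F0 :\ g \subset F0 by apply: subsetDl.
have xa := component_contains_tail.
have nav : ~~ con (F0 :\ g) a v.
  rewrite connectC; apply: contra (joins_off Jf (T1_off_v fT1)).
  by move/(connect_isolated (fun e eH => F0_off_v (subsetP HF0 e eH))) ->.
have nay : ~~ con (F0 :\ g) a y.
  by apply: contra F0_disconnects_xy => /(connect_subset HF0); apply: connect_trans xa.
have HE : T2 :\ g :\ ey :\ ex = F0 :\ g by rewrite setD1C [T2 :\ g :\ ex]setD1C setD1C.
have away t : con (T2 :\ g :\ ey) a t -> con (F0 :\ g) a t.
  by rewrite -HE => C; apply: (connect_setD1_away Hex _ _ C); rewrite HE.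
apply/negP => /(connect_setD1_away Hey (contra (away v) nav) (contra (away y) nay)).
move/away/(connect_subset HF0)/(connect_trans xa) => xb.
by move: bS; rewrite !inE xb orbT.
Qed.

Lemma reach_exchange_lt : reach (T2 :\ g :|: [set f]) < reach T2.
Proof.
have sub : (T2 :\ g :|: [set f]) :\ ex :\ ey :\ f \subset F0 :\ g.
  apply/subsetP => e; rewrite !inE => /and3P [/negbTE ef -> /andP [->]].
  by rewrite ef orbF => /andP [-> ->].
have nxb : ~~ con (F0 :\ g) x b.
  by apply: contra bS => /(connect_subset (subsetDl _ _)) xb; rewrite !inE xb orbT.
have nxa : ~~ con (F0 :\ g) x a by rewrite connectC.
have shrink u : con ((T2 :\ g :|: [set f]) :\ ex :\ ey) x u -> con (F0 :\ g) x u.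
  move/(connect_setD1_away Jf (contra (connect_subset sub) nxa)
                              (contra (connect_subset sub) nxb)).
  exact: connect_subset sub.
apply: proper_card; apply/properP; split.
  apply/subsetP => u; rewrite !inE => /shrink; exact: connect_subset (subsetDl _ _).
exists a; first by rewrite inE component_contains_tail.
by rewrite inE; apply: contra nxa => /shrink.
Qed.

End Exchange.

Lemma component_exchange : exists T1' T2', [/\ complementary_trees T1' T2',
  ez \in T1', ex \in T2', ey \in T2' & reach T2' < reach T2].
Proof.
have [f [a [b [fT1 Jf aS bS nax]]]] := leaving_edge.
have ax : con F0 a x by rewrite connectC (component_contains_tail fT1 Jf aS).
have fF0 : forest F0.
  by case: D => _ _ _ fT2 _ _; apply: forest_subset fT2; apply/subsetP => e /setD1P [_ /setD1P []].
have [g gF0 /andP [cut nga]] := forest_path_cross fF0 ax nax.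
have [gT2 gex gey] : [/\ g \in T2, g != ex & g != ey] by move: gF0; rewrite !inE => /and3P [].
exists (T1 :\ f :|: [set g]), (T2 :\ g :|: [set f]); split.
- apply: swap_complementary => //; first by case/setD1P: fT1.
  by rewrite (connect_ends _ Jf) (exchange_disconnects fT1 Jf aS bS nga).
- by rewrite !inE ezT1 andbT; case/setD1P: fT1 => /negbTE; rewrite eq_sym => ->.
- by rewrite !inE exT2 eq_sym gex.
- by rewrite !inE eyT2 eq_sym gey.
- exact: reach_exchange_lt fT1 Jf aS bS nga.
Qed.

End Component.

Lemma rotate_step : separated ex ez ey \/ exists T1' T2', [/\ complementary_trees T1' T2',
  ez \in T1', ex \in T2', ey \in T2' & reach T2' < reach T2].
Proof.
have [xz|nxz] := boolP (con F0 x z); first by right; apply: component_exchange.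
by left; apply: rotate_direct.
Qed.

End Step.

Lemma separated_rotate : separated ex ey ez -> separated ex ez ey.
Proof.
case=> T1 [T2 [D ezT1 exT2 eyT2]].
elim: {T2}_.+1 {-2}T2 (ltnSn (reach T2)) T1 D ezT1 exT2 eyT2 => // n IH T2 lt T1 D ezT1 exT2 eyT2.
have [//|[T1' [T2' [D' ezT1' exT2' eyT2' lt']]]] := rotate_step D ezT1 exT2 eyT2.
exact: IH (leq_trans lt' lt) _ D' ezT1' exT2' eyT2'.
Qed.

End Rotation.
End Connectivity.

Section Reduction.
Variables (V E : finType) (src dst : E -> V) (v a b : V).
Implicit Types (A T : {set E}) (G : {set option E}) (e : E) (p q : V).
Local Notation rsrc := (red_ends src a).
Local Notation rdst := (red_ends dst b).
Local Notation con A := (connect (adj src dst A)).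
Local Notation rcon G := (connect (adj rsrc rdst G)).
Local Notation off_v A := (forall e, e \in A -> (src e != v) && (dst e != v)).

Definition lift_edges A : {set option E} :=
  [set o | if o is Some e then e \in A else false].

Lemma connect_lift A G p q : (forall e, e \in A -> Some e \in G) -> con A p q -> rcon G p q.
Proof.
move=> AG; apply: connect_sub => {}p {}q /existsP [e /andP [eA J]].
by apply: (connect_edge (AG e eA)).
Qed.

Lemma connect_unlift G p q : None \notin G -> rcon G p q -> con [set e | Some e \in G] p q.
Proof.
move=> NG; apply: connect_sub => {}p {}q /existsP [[e|] /andP [eG J]]; last by rewrite eG in NG.
by apply: (connect_edge (e := e) _ J); rewrite inE.
Qed.

Lemma forest_lift A : forest src dst A -> forest rsrc rdst (lift_edges A).
Proof.
move=> fA [e|]; rewrite inE // => eA; apply: contra (fA e eA) => C.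
have NG : None \notin lift_edges A :\ Some e by rewrite !inE.
by apply: connect_subset (connect_unlift NG C); apply/subsetP => e'; rewrite !inE.
Qed.


Lemma spanning_tree_delete_leaf T e c G :
  gconnected src dst [set: V] T -> forest src dst T -> joins src dst e v c ->
  off_v (T :\ e) -> lift_edges (T :\ e) \subset G ->
  spanning_tree rsrc rdst (red_vertices v) G (lift_edges (T :\ e)).
Proof.
move=> cT fT J off sub; split => //.
  move=> p q; rewrite !inE => /andP [pv _] /andP [qv _].
  by apply: connect_lift (connected_delete_leaf cT J off pv qv) => e' e'T; rewrite inE.
by apply/forest_acyclic/forest_lift/(forest_subset _ fT)/subsetDl.
Qed.

Variables (ea eb : E).
Hypotheses (Hea : joins src dst ea v a) (Heb : joins src dst eb v b).
Hypothesis loopless : forall e, src e != dst e.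

Lemma contract_connected T : gconnected src dst [set: V] T -> ea \in T -> eb \in T ->
  off_v (T :\ ea :\ eb) ->
  gconnected rsrc rdst (red_vertices v) (None |: lift_edges (T :\ ea :\ eb)).
Proof.
move=> cT eaT ebT off p q; rewrite !inE => /andP [pv _] /andP [qv _].
set G := None |: _; pose phi u := if u == v then a else u.
(* Collapsing v onto a maps each edge of T to a path of G: ea shrinks to the vertex a and
   eb becomes the new edge None from a to b. *)
have phiE u : u != v -> phi u = u by rewrite /phi => /negbTE ->.
have [av bv] := (joins_neq (loopless ea) Hea, joins_neq (loopless eb) Heb).
have phiv : phi v = a by rewrite /phi eqxx.
have edge e : e \in T -> rcon G (phi (src e)) (phi (dst e)).
  move=> eT; have [->|nea] := eqVneq e ea.
    by case/joinsP: Hea => -[-> ->]; rewrite phiv phiE // eq_sym.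
  have [->|neb] := eqVneq e eb.
    have ab : rcon G a b by apply: (connect_edge (e := None)); rewrite ?setU11 // /joins !eqxx.
    by case/joinsP: Heb => -[-> ->]; rewrite phiv phiE 1?eq_sym // connectC.
  have eT' : e \in T :\ ea :\ eb by rewrite !inE neb nea.
  have /andP [sv dv] := off e eT'.
  rewrite !phiE //; apply: (connect_edge (e := Some e)); last exact: joins_ends src dst e.
  by rewrite in_setU1 inE eT' orbT.
rewrite -(phiE p pv) -(phiE q qv); apply: connect_map (cT p q (in_setT _) (in_setT _)).
move=> p' q' /existsP [e /andP [eT /joinsP [] [<- <-]]]; first exact: edge.
by rewrite connectC; apply: edge.
Qed.

Lemma contract_forest T : forest src dst T -> ea \in T -> eb \in T -> ea != eb ->
  forest rsrc rdst (None |: lift_edges (T :\ ea :\ eb)).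
Proof.
move=> fT eaT ebT neab [e|] eG; apply/negP => C.
  have [neb nea eT] : [/\ e != eb, e != ea & e \in T] by move: eG; rewrite !inE => /and3P [].
  move/negP: (fT e eT); apply; move: C; apply: connect_sub => p q /existsP [[e'|] /andP [e'G J]].
    move: e'G; rewrite !inE => /andP [ne' /and3P [_ _ e'T]].
    by apply: (connect_edge (e := e') _ J); rewrite !inE ne' e'T.
  have ab : con (T :\ e) a b.
    apply: connect_trans (_ : con (T :\ e) a v) (connect_edge _ Heb).
      by rewrite connectC; apply: connect_edge Hea; rewrite !inE eq_sym nea.
    by rewrite !inE eq_sym neb.
  by case/joinsP: J => -[<- <-]; rewrite // connectC.
move/negP: (fT eb ebT); apply; rewrite (connect_ends _ Heb).
apply: connect_trans (_ : con (T :\ eb) v a) _; first by apply: connect_edge Hea; rewrite !inE neab.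
have NG : None \notin (None |: lift_edges (T :\ ea :\ eb)) :\ None by rewrite !inE eqxx.
apply: connect_subset (connect_unlift NG C).
by apply/subsetP => e; rewrite !inE /= => /and3P [-> _ ->].
Qed.

Lemma separated_reduction c ec : joins src dst ec v c ->
  incident src dst v = [set ea; eb; ec] -> ea != eb -> separated src dst ea eb ec ->
  bispanning rsrc rdst (red_vertices v) (red_edges ea eb ec).
Proof.
move=> Hec inc neab [T1 [T2 [D ecT1 eaT2 ebT2]]]; case: (D) => c1 f1 c2 f2 _ _.
have DC := complementary_treesC D.
have [eaT1 ebT1] := (complementary_trees_disjoint DC eaT2, complementary_trees_disjoint DC ebT2).
have ecT2 := complementary_trees_disjoint D ecT1.
have off1 : off_v (T1 :\ ec).
  by apply: (edge_off_v inc); rewrite !inE ?eqxx ?(negbTE eaT1) ?(negbTE ebT1) /= ?andbF.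
have off2 : off_v (T2 :\ ea :\ eb).
  by apply: (edge_off_v inc); rewrite !inE ?eqxx ?(negbTE ecT2) /= ?andbF.
exists (lift_edges (T1 :\ ec)), (None |: lift_edges (T2 :\ ea :\ eb)); split.
- apply: spanning_tree_delete_leaf c1 f1 Hec off1 _.
  apply/subsetP => -[e|]; rewrite !inE //= => /andP [nec eT1].
  by rewrite (negbTE nec) orbF; apply/norP; split; apply: contraTneq eT1 => ->.
- split; [|exact: contract_connected | exact/forest_acyclic/contract_forest].
  apply/subsetP => -[e|]; rewrite !inE //= => /and3P [neb nea eT2].
  by rewrite (negbTE neb) (negbTE nea) /=; apply: contraTneq eT2 => ->.
- rewrite -setI_eq0; apply/eqP/setP => -[e|]; rewrite !inE //=.
  apply/negP => /and4P [/andP [_ /(complementary_trees_disjoint D)] /negP nT2 _ _ eT2].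
  exact: nT2.
apply/setP => -[e|]; rewrite !inE //=.
have [eT1|eT1] := boolP (e \in T1).
  have [eaf ebf] : e != ea /\ e != eb by split; apply: contraTneq eT1 => ->.
  rewrite andbT (negbTE eaf) (negbTE ebf) (negbTE (complementary_trees_disjoint D eT1)).
  by rewrite !andbF !orbF.
have eT2 := complementary_trees_cover D eT1.
have nec : e != ec by apply: contraTneq eT2 => ->.
by rewrite andbF eT2 (negbTE nec) andbT orbF negb_or andbC.
Qed.
End Reduction.

Lemma set3C23 (T : finType) (a b c : T) : [set a; b; c] = [set a; c; b].
Proof. by rewrite setUAC. Qed.

Lemma set3C12 (T : finType) (a b c : T) : [set a; b; c] = [set b; a; c].
Proof. by rewrite [[set a; b]]setUC. Qed.

Lemma card_set3 (T : finType) (a b c : T) :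
  #|[set a; b; c]| = 3 -> [/\ a != b, a != c & b != c].
Proof.
rewrite -setUA cardsU1 cards2 !inE negb_or.
by case: (a != b); case: (a != c); case: (b != c).
Qed.

Section DegreeThreeVertex.
Variables (V E : finType) (src dst : E -> V).
Variables (v x y z : V) (ex ey ez : E).
Hypotheses (loopless : forall e, src e != dst e) (atomic_G : atomic src dst).
Hypotheses (Hex : joins src dst ex v x) (Hey : joins src dst ey v y)
           (Hez : joins src dst ez v z).
Hypotheses (Hinc : incident src dst v = [set ex; ey; ez]) (Hdeg : #|[set ex; ey; ez]| = 3).

Lemma separated_initial : [\/ separated src dst ex ey ez, separated src dst ex ez ey |
                               separated src dst ey ez ex].
Proof.
have [T1 [T2 D]] := bispanning_complementary atomic_G.1.
have meets T : gconnected src dst [set: V] T -> [|| ex \in T, ey \in T | ez \in T].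
  have xv : x != v by rewrite eq_sym (joins_neq (loopless ex) Hex).
  move=> cT; have [e eT] := connected_incident cT xv.
  by rewrite Hinc !inE -orbA => /or3P [] /eqP <-; rewrite eT ?orbT.
case: (D) => c1 _ c2 _ _ _; have := meets _ c1; have := meets _ c2.
have DC := complementary_treesC D.
have cov e : e \notin T1 -> e \in T2 := complementary_trees_cover D.
have dis e : e \in T1 -> e \notin T2 := complementary_trees_disjoint D.
case: (boolP (ex \in T1)) => [x1|/cov x2]; case: (boolP (ey \in T1)) => [y1|/cov y2];
  case: (boolP (ez \in T1)) => [z1|/cov z2];
  try by [ constructor 1; exists T1, T2 | constructor 1; exists T2, T1
         | constructor 2; exists T1, T2 | constructor 2; exists T2, T1
         | constructor 3; exists T1, T2 | constructor 3; exists T2, T1 ].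
by rewrite (negbTE (dis _ x1)) (negbTE (dis _ y1)) (negbTE (dis _ z1)).
Qed.

Lemma separated_all : [/\ separated src dst ex ey ez, separated src dst ex ez ey &
                           separated src dst ey ez ex].
Proof.
have [nxy nxz nyz] := card_set3 Hdeg.
have Hinc_yxz : incident src dst v = [set ey; ex; ez] by rewrite Hinc set3C12.
have Hinc_xzy : incident src dst v = [set ex; ez; ey] by rewrite Hinc set3C23.
have Hinc_yzx : incident src dst v = [set ey; ez; ex] by rewrite Hinc_yxz set3C23.
have rot_xyz := separated_rotate loopless atomic_G Hex Hey Hez Hinc nxy.
have nyx : ey != ex by rewrite eq_sym.
have rot_yxz := separated_rotate loopless atomic_G Hey Hex Hez Hinc_yxz nyx.
have rot_xzy := separated_rotate loopless atomic_G Hex Hez Hey Hinc_xzy nxz.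
have rot_yzx := separated_rotate loopless atomic_G Hey Hez Hex Hinc_yzx nyz.
have sxy : separated src dst ex ey ez.
  by case: separated_initial => [//|/rot_xzy //|/rot_yzx/separatedC //].
by split => //; [apply: rot_xyz | apply/rot_yxz/separatedC].
Qed.

End DegreeThreeVertex.

Theorem mainTheorem12 (V E : finType) (src dst : E -> V)
  (loopless : forall e, src e != dst e)
  (Hatomic : atomic src dst)
  (v x y z : V) (ex ey ez : E)
  (Hex : joins src dst ex v x) (Hey : joins src dst ey v y) (Hez : joins src dst ez v z)
  (Hinc : [set e | (src e == v) || (dst e == v)] = [set ex; ey; ez])
  (Hdeg : #|[set ex; ey; ez]| = 3) :
  [/\ bispanning (red_ends src x) (red_ends dst y) (red_vertices v) (red_edges ex ey ez),
      bispanning (red_ends src x) (red_ends dst z) (red_vertices v) (red_edges ex ey ez) &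
      bispanning (red_ends src y) (red_ends dst z) (red_vertices v) (red_edges ex ey ez)].
Proof.
have inc : incident src dst v = [set ex; ey; ez] := Hinc.
have [nxy nxz nyz] := card_set3 Hdeg.
have [sxy sxz syz] := separated_all loopless Hatomic Hex Hey Hez inc Hdeg.
have inc_xzy : incident src dst v = [set ex; ez; ey] by rewrite inc set3C23.
have inc_yzx : incident src dst v = [set ey; ez; ex] by rewrite inc set3C12 set3C23.
split.
- exact (separated_reduction Hex Hey loopless Hez inc nxy sxy).
- rewrite /red_edges set3C23.
  exact (separated_reduction Hex Hez loopless Hey inc_xzy nxz sxz).
- rewrite /red_edges set3C12 set3C23.
  exact (separated_reduction Hey Hez loopless Hex inc_yzx nyz syz).
Qed.
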